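(* Let $n\ge1$ and suppose $\alpha>0$ and $T$ are real constants. Then for $s<t\le T$ and $|x|\le\sqrt{T-t}$, $$\int_{|y|<\sqrt{T-s}}\Phi(x-y,t-s)^{\alpha/n}\,dy\ge\frac{C}{(t-s)^{(\alpha-n)/2}},$$ where $C=C(n,\alpha)$ is a positive constant.
   Context: $\Phi$ is the heat kernel: $\Phi(x,t)=(4\pi t)^{-n/2}e^{-|x|^2/(4t)}$ for $t>0$ and $\Phi(x,t)=0$ for $t\le0$. *)

From HB Require Import structures.
From mathcomp Require Import all_boot all_order all_algebra.
From mathcomp Require Import all_classical all_reals all_analysis.
Set Implicit Arguments. Unset Strict Implicit. Unset Printing Implicit Defensive.
Import Order.TTheory GRing.Theory Num.Theory.
Import numFieldNormedType.Exports.
Local Open Scope ring_scope.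

(* Euclidean norm on R^n = 'rV[R]_n (the library's norm on 'rV is the sup norm). *)
Definition enorm {R : realType} {n : nat} (x : 'rV[R]_n) : R :=
  Num.sqrt (\sum_(i < n) x ord0 i ^+ 2).

Definition heat_kernel {R : realType} {n : nat} (x : 'rV[R]_n) (t : R) : R :=
  if 0 < t then
    powR (4 * pi * t) (- (n%:R / 2)) * expR (- (enorm x ^+ 2 / (4 * t)))
  else 0.

(* Lebesgue integral over R^k of an (extended-real valued) function of the
   coordinates, defined as the iterated integral w.r.t. the 1-dimensional
   Lebesgue measure (for non-negative measurable integrands this coincides with
   the integral w.r.t. k-dimensional Lebesgue measure, by Tonelli). *)
Fixpoint iter_lebesgue_int {R : realType} (k : nat) (f : seq R -> \bar R) : \bar R :=
  match k with
  | 0 => f [::]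
  | k'.+1 => (\int[@lebesgue_measure R]_(t in setT)
                 iter_lebesgue_int k' (fun v => f (t :: v)))%E
  end.

Definition rV_lebesgue_int {R : realType} (n : nat) (f : 'rV[R]_n -> \bar R) : \bar R :=
  iter_lebesgue_int n (fun s => f (\row_(i < n) nth 0 s i)).

(* Put rho = sqrt (t - s).  Since |x| <= sqrt (T - s) and rho <= sqrt (T - s),
   there is a point z with |x - z| <= rho/2 and |z| <= sqrt (T - s) - rho/2, so
   the cube of half-side rho/(4 sqrt n) around z (of Euclidean radius rho/4) lies
   in the ball |y| < sqrt (T - s) and in |x - y| <= rho.  There the heat kernel is
   at least (4 pi (t - s))^(-n/2) e^(-1/4); raising to alpha/n and multiplying by
   the volume (rho/(2 sqrt n))^n of the cube gives C (t - s)^((n - alpha)/2). *)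

From HB Require Import structures.
From mathcomp Require Import all_boot all_order all_algebra.
From mathcomp Require Import all_classical all_reals all_analysis.
From mathcomp Require Import ring lra.
Import Order.TTheory GRing.Theory Num.Theory.
Import numFieldNormedType.Exports.
Local Open Scope ring_scope.

Lemma sqr_sum_mul_le {R : realDomainType} {I : finType} (u v : I -> R) :
  (\sum_i u i * v i) ^+ 2 <= (\sum_i u i ^+ 2) * (\sum_i v i ^+ 2).
Proof.
set A := \sum_i u i ^+ 2; set B := \sum_i v i ^+ 2; set S := \sum_i u i * v i.
have B_ge0 : 0 <= B by rewrite sumr_ge0 // => i _; apply: sqr_ge0.
have [B_eq0|B_neq0] := eqVneq B 0.
  have v0 i : v i = 0.
    apply/eqP; rewrite -sqrf_eq0; apply/eqP.
    by apply: (psumr_eq0P _ B_eq0) => // j _; apply: sqr_ge0.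
  by rewrite /S big1 => [|i _]; rewrite ?v0 ?mulr0 // expr0n B_eq0 mulr0.
have : 0 <= \sum_i (B * u i - S * v i) ^+ 2 by rewrite sumr_ge0 // => i _; apply: sqr_ge0.
have -> : \sum_i (B * u i - S * v i) ^+ 2 =
          \sum_i (B ^+ 2 * u i ^+ 2 - 2 * B * S * (u i * v i) + S ^+ 2 * v i ^+ 2).
  by apply: eq_bigr => i _; ring.
rewrite big_split sumrB /= -!mulr_sumr -/A -/B -/S.
have : 0 < B by rewrite lt_def B_neq0.
nra.
Qed.

Section EuclideanNorm.
Context {R : realType} {n : nat}.
Implicit Types (x y : 'rV[R]_n) (a : R).

Lemma enorm_ge0 x : 0 <= enorm x.
Proof. exact: sqrtr_ge0. Qed.

Lemma sqr_enorm x : enorm x ^+ 2 = \sum_i x ord0 i ^+ 2.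
Proof. by rewrite sqr_sqrtr // sumr_ge0 // => i _; apply: sqr_ge0. Qed.

Lemma enormZ a x : enorm (a *: x) = `|a| * enorm x.
Proof.
rewrite /enorm; under eq_bigr do rewrite mxE exprMn.
by rewrite -mulr_sumr sqrtrM ?sqr_ge0 // sqrtr_sqr.
Qed.

Lemma enorm0 : enorm (0 : 'rV[R]_n) = 0.
Proof. by rewrite -(scale0r 0) enormZ normr0 mul0r. Qed.

Lemma enormN x : enorm (- x) = enorm x.
Proof. by rewrite -scaleN1r enormZ normrN1 mul1r. Qed.

Lemma enormD_le x y : enorm (x + y) <= enorm x + enorm y.
Proof.
rewrite -[leRHS]ger0_norm ?addr_ge0 ?enorm_ge0 // -sqrtr_sqr ler_sqrt ?sqr_ge0 //.
under eq_bigr do rewrite mxE sqrrD.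
rewrite !big_split /= sqrrD !sqr_enorm lerD2r lerD2l mulr2n.
suff CS : \sum_i x ord0 i * y ord0 i <= enorm x * enorm y by apply: lerD.
apply: le_trans (real_ler_norm _) _; first exact: num_real.
rewrite -sqrtr_sqr -[leRHS]ger0_norm ?mulr_ge0 ?enorm_ge0 // -sqrtr_sqr.
by rewrite ler_sqrt ?sqr_ge0 // exprMn !sqr_enorm sqr_sum_mul_le.
Qed.

Lemma enorm_le_sqrt_dim x (h : R) : 0 <= h ->
  (forall i, `|x ord0 i| <= h) -> enorm x <= Num.sqrt n%:R * h.
Proof.
move=> h_ge0 xh; rewrite -[h in leRHS]ger0_norm // -sqrtr_sqr -sqrtrM ?ler0n //.
rewrite ler_wsqrtr // mulr_natl -[in leRHS](card_ord n) -sumr_const.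
apply: ler_sum => i _; rewrite -real_normK ?num_real //.
by rewrite ler_sqr ?nnegrE.
Qed.

Lemma enorm_near_inner_ball x (rho M : R) : 0 < rho -> rho <= M ->
  enorm x <= M -> exists z, enorm (x - z) <= rho / 2 /\ enorm z <= M - rho / 2.
Proof.
move=> rho_gt0 rhoM xM; have [x_small|x_large] := lerP (enorm x) (rho / 2).
  by exists 0; rewrite subr0 enorm0; split=> //; lra.
have x_gt0 : 0 < enorm x by apply: lt_trans x_large; lra.
set a := rho / (2 * enorm x).
have a_lt1 : a < 1 by rewrite ltr_pdivrMr ?mulr_gt0 //; lra.
have aE : a * enorm x = rho / 2 by rewrite /a; field; rewrite gt_eqF.
have a_ge0 : 0 <= a by rewrite divr_ge0 ?mulr_ge0 // ltW.
exists ((1 - a) *: x); split.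
  by rewrite scalerBl scale1r opprB addrC subrK enormZ ger0_norm // aE.
by rewrite enormZ ger0_norm ?subr_ge0 ?(ltW a_lt1) // mulrBl mul1r aE; lra.
Qed.

Lemma exists_quarter_ball_inside x (rho M : R) : 0 < rho -> rho <= M ->
  enorm x <= M -> exists z, forall y, enorm (y - z) <= rho / 4 ->
  enorm y < M /\ enorm (x - y) <= rho.
Proof.
move=> rho_gt0 rhoM xM; have [z [xz zM]] := enorm_near_inner_ball _ _ _ rho_gt0 rhoM xM.
exists z => y yz; split.
  rewrite -(subrK z y) addrC; apply: le_lt_trans (enormD_le _ _) _; lra.
rewrite -(subrK z x) -addrA; apply: le_trans (enormD_le _ _) _.
rewrite -[z - y]opprB enormN; lra.
Qed.

End EuclideanNorm.

Section HeatKernel.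
Context {R : realType}.

Lemma heat_kernel_ge n (x : 'rV[R]_n) tau : 0 < tau -> enorm x <= Num.sqrt tau ->
  powR (4 * pi * tau) (- (n%:R / 2)) * expR (- (1 / 4)) <= heat_kernel x tau.
Proof.
move=> tau_gt0 x_le; rewrite /heat_kernel tau_gt0 ler_pM2l ?powR_gt0 ?mulr_gt0 ?pi_gt0 //.
have x2_le : enorm x ^+ 2 <= tau.
  by rewrite -(sqr_sqrtr (ltW tau_gt0)) ler_sqr ?nnegrE ?enorm_ge0 ?sqrtr_ge0.
by rewrite ler_expR lerN2 ler_pdivrMr ?mulr_gt0 ?pi_gt0 //; lra.
Qed.

Definition heat_ball_const (n : nat) (alpha : R) : R :=
  powR (4 * pi) (- (alpha / 2)) * expR (- (alpha / (4 * n%:R))) /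
  (2 * Num.sqrt n%:R) ^+ n.

Lemma heat_ball_const_gt0 n alpha : (0 < n)%N -> 0 < heat_ball_const n alpha.
Proof.
move=> n_gt0; have pi4_gt0 : 0 < 4 * pi :> R by rewrite mulr_gt0 ?pi_gt0.
have sqrt_n2_gt0 : 0 < 2 * Num.sqrt n%:R :> R by rewrite mulr_gt0 ?sqrtr_gt0 ?ltr0n.
by rewrite divr_gt0 ?mulr_gt0 ?powR_gt0 ?expR_gt0 ?exprn_gt0.
Qed.

Lemma heat_ball_constE n alpha tau : (0 < n)%N -> 0 < tau ->
  powR (powR (4 * pi * tau) (- (n%:R / 2)) * expR (- (1 / 4))) (alpha / n%:R) *
  (2 * (Num.sqrt tau / (4 * Num.sqrt n%:R))) ^+ n =
  heat_ball_const n alpha / powR tau ((alpha - n%:R) / 2).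
Proof.
move=> n_gt0 tau_gt0; have n0 : n%:R != 0 :> R by rewrite pnatr_eq0 -lt0n.
have sqrt_n0 : Num.sqrt n%:R != 0 :> R by rewrite gt_eqF // sqrtr_gt0 ltr0n.
have pi4_ge0 : 0 <= 4 * pi :> R by rewrite mulr_ge0 ?pi_ge0.
rewrite powRM ?powR_ge0 ?expR_ge0 // -powRrM -expRM powRM ?(ltW tau_gt0) //.
have -> : (2 * (Num.sqrt tau / (4 * Num.sqrt n%:R))) =
          Num.sqrt tau / (2 * Num.sqrt n%:R) by field.
rewrite expr_div_n -powR12_sqrt ?ltW // -powR_mulrn ?powR_ge0 // -powRrM.
rewrite /heat_ball_const -powRN.
have -> : - ((alpha - n%:R) / 2) = - (alpha / 2) + (2^-1 * n%:R) by field.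
rewrite powRD; last by rewrite (gt_eqF tau_gt0) implybT.
have -> : - (n%:R / 2) * (alpha / n%:R) = - (alpha / 2) :> R by field.
have -> : - (1 / 4) * (alpha / n%:R) = - (alpha / (4 * n%:R)) :> R by field.
ring.
Qed.

End HeatKernel.

Section IteratedIntegral.
Context {R : realType}.
Local Open Scope ereal_scope.

Lemma iter_lebesgue_int_ge0 k (f : seq R -> \bar R) :
  (forall s, 0 <= f s) -> 0 <= iter_lebesgue_int k f.
Proof.
elim: k f => [|k IH] f f0 /=; first exact: f0.
by apply: integral_ge0 => t _; apply: IH.
Qed.

(* No measurability is needed: a nonnegative integral is the supremum of the
   integrals of the simple functions below the integrand. *)
Lemma le_iter_lebesgue_int k (f g : seq R -> \bar R) :
  (forall s, 0 <= f s) -> (forall s, f s <= g s) ->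
  iter_lebesgue_int k f <= iter_lebesgue_int k g.
Proof.
elim: k f g => [|k IH] f g f0 fg /=; first exact: fg.
have g0 s : 0 <= g s by apply: le_trans (f0 s) (fg s).
rewrite !ge0_integralTE => [|t|t]; try exact: iter_lebesgue_int_ge0.
apply: ereal_sup_le => _ [u uf <-]; exists u => // t.
by apply: le_trans (uf t) _; apply: IH.
Qed.

Lemma iter_lebesgue_int0 k : iter_lebesgue_int k (fun _ : seq R => 0) = 0.
Proof. by elim: k => [|k IH] //=; rewrite IH integral0. Qed.

Fixpoint in_cube (h : R) (k : nat) (p : nat -> R) (s : seq R) : bool :=
  if k is k'.+1 then
    (`|head 0 s - p 0%N| <= h)%R && in_cube h k' (p \o succn) (behead s)
  else true.

Lemma in_cubeP {h k p s} : in_cube h k p s ->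
  forall i, (i < k)%N -> (`|nth 0 s i - p i| <= h)%R.
Proof.
elim: k p s => [//|k IH] p s /= /andP[s0 sk] [|i] /=; first by case: s s0 sk.
by rewrite ltnS => /(IH _ _ sk); case: s {s0 sk} => //=; rewrite nth_nil.
Qed.

Lemma integral_indic_centered (a h c : R) : (0 <= h)%R ->
  \int[@lebesgue_measure R]_(t in setT) (if `|t - a| <= h then c%:E else 0)%R
  = (c * (2 * h))%:E.
Proof.
move=> h0.
rewrite (_ : (fun t => _) = cst c%:E \_ [set` `[a - h, a + h]%R]); last first.
  by apply/funext => t; rewrite patchE mem_setE in_itv /= ler_distl.
rewrite -integral_mkcond integral_cst //= lebesgue_measure_itv /= lte_fin.
case: ltP => [_|]; first by rewrite -EFinM; congr EFin; ring.
move=> ?; have -> : h = 0%R by lra.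
by rewrite mule0 !mulr0.
Qed.

Lemma iter_lebesgue_int_cube k p (c h : R) : (0 <= h)%R ->
  iter_lebesgue_int k (fun s => if in_cube h k p s then c%:E else 0) =
  (c * (2 * h) ^+ k)%:E.
Proof.
move=> h0; elim: k p => [|k IH] p /=; first by rewrite mulr1.
rewrite exprSr mulrA -(integral_indic_centered (p 0%N)) //.
apply: eq_integral => t _; case: ifP => _; first by rewrite IH.
exact: iter_lebesgue_int0.
Qed.

Lemma iter_lebesgue_int_ge_cube k p (h c : R) (f : seq R -> \bar R) :
  (0 <= h)%R -> (0 <= c)%R -> (forall s, 0 <= f s) ->
  (forall s, in_cube h k p s -> c%:E <= f s) ->
  (c * (2 * h) ^+ k)%:E <= iter_lebesgue_int k f.
Proof.
move=> h0 c0 f0 cf; rewrite -(iter_lebesgue_int_cube k p c _ h0).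
apply: le_iter_lebesgue_int => s; first by case: ifP; rewrite ?lee_fin.
by case: ifP => [/cf|].
Qed.
End IteratedIntegral.

Lemma enorm_in_cube_le {R : realType} n (z : 'rV[R]_n) (h : R) s : 0 <= h ->
  in_cube h n (fun i => if insub i is Some j then z ord0 j else 0) s ->
  enorm (\row_i nth 0 s i - z) <= Num.sqrt n%:R * h.
Proof.
move=> h_ge0 s_cube; apply: enorm_le_sqrt_dim => // i.
by rewrite !mxE; have := in_cubeP s_cube _ (ltn_ord i); rewrite valK.
Qed.

Theorem lemma2p10 (R : realType) (n : nat) (alpha : R) :
  (1 <= n)%N -> 0 < alpha ->
  exists C : R, 0 < C /\
    forall (T s t : R) (x : 'rV[R]_n),
      s < t -> t <= T -> enorm x <= Num.sqrt (T - t) ->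
      ((C / powR (t - s) ((alpha - n%:R) / 2))%:E <=
        rV_lebesgue_int (fun y : 'rV[R]_n =>
          if (enorm y < Num.sqrt (T - s))%R
          then (powR (heat_kernel (x - y) (t - s)) (alpha / n%:R))%:E
          else 0%E))%E.
Proof.
move=> n_gt0 alpha_gt0; exists (heat_ball_const n alpha).
split=> [|T s t x st tT xT]; first exact: heat_ball_const_gt0.
set tau := t - s; have tau_gt0 : 0 < tau by rewrite subr_gt0.
set rho := Num.sqrt tau; have rho_gt0 : 0 < rho by rewrite sqrtr_gt0.
set M := Num.sqrt (T - s).
have rhoM : rho <= M by apply: ler_wsqrtr; rewrite lerB.
have xM : enorm x <= M by apply: le_trans xT (ler_wsqrtr _); rewrite lerB // ltW.
have [z zP] := exists_quarter_ball_inside _ _ _ rho_gt0 rhoM xM.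
set h := rho / (4 * Num.sqrt n%:R).
have sqrt_n_gt0 : 0 < Num.sqrt n%:R :> R by rewrite sqrtr_gt0 ltr0n.
have h_ge0 : 0 <= h by rewrite divr_ge0 ?mulr_ge0 ?ltW.
have quarter : Num.sqrt n%:R * h = rho / 4 by rewrite /h; field; rewrite gt_eqF.
have c_ge0 : 0 <= (4 * pi * tau) `^ (- (n%:R / 2)) * expR (- (1 / 4)).
  by rewrite mulr_ge0 ?powR_ge0 ?expR_ge0.
rewrite -heat_ball_constE // /rV_lebesgue_int.
apply: (iter_lebesgue_int_ge_cube _ (fun i => if insub i is Some j then z ord0 j else 0))
  => // [|s0|s0 s0_cube]; first exact: powR_ge0.
  by case: ifP; rewrite ?lee_fin ?powR_ge0.
have := enorm_in_cube_le _ _ _ _ h_ge0 s0_cube; rewrite quarter => /zP[yM xy].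
have Phi_ge := heat_kernel_ge _ _ _ tau_gt0 xy.
rewrite ifT // lee_fin ge0_ler_powR ?nnegrE ?(le_trans c_ge0 Phi_ge) //.
by rewrite divr_ge0 ?ler0n ?ltW.
Qed.
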